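(* Let $\mathbb{M}$ be an implicitization matrix of $\phi$ (a $d\times d$ matrix), and let $\mathbb{M}^*$ be the $d\times(d-1)$ sub-matrix obtained by erasing the first column of $\mathbb{M}$ (the column corresponding to $P$). Then the gcd of the maximal minors of $\mathbb{M}^*$ equals $F^p$ (up to a nonzero constant) for some $p\in\mathbb{N}$. Moreover the following are equivalent: (1) $\phi$ is birational; (2) $p=0$; (3) $\mathbb{M}^*$ is an inversion matrix of $\phi$.
   Context: $\mathbb{K}$ is a field of characteristic zero. $\phi:\mathbb{P}^2\dashrightarrow\mathbb{P}^3$, $\mathbf{t}=(t_1:t_2:t_3)\mapsto (p_1(\mathbf{t}):\dots:p_4(\mathbf{t}))$, with $p_i\in\mathbb{K}[t_1,t_2,t_3]$ homogeneous of the same degree, $\phi$ generically finite, so the closure of its image is an irreducible surface $S\subset\mathbb{P}^3$. $F\in\mathbb{K}[X_1,\dots,X_4]$ is the implicit equation of $S$ (irreducible homogeneous of minimal degree with $F(p_1,\dots,p_4)\equiv0$, defined up to a nonzero constant). $\mathbb{K}(S)$, $\mathbb{K}(\mathbb{P}^2)$ are the rational function fields (rank over $\mathbb{K}(S)$ of a matrix over $\mathbb{K}[\underline{X}]$ means rank of its image over the fraction field of $\mathbb{K}[\underline{X}]/(F)$); $\phi^\sharp:\mathbb{K}(S)\to\mathbb{K}(\mathbb{P}^2)$, $f\mapsto f\circ\phi$; $\deg\phi=[\mathbb{K}(\mathbb{P}^2):\mathbb{K}(S)]$; $\phi$ is birational iff $\deg\phi=1$. A moving surface of bi-degree $(m;n)$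 ($m,n\ge1$) is a polynomial bihomogeneous of degree $m$ in $\mathbf{t}=(t_1,t_2,t_3)$ and $n$ in $\underline{X}=(X_1,\dots,X_4)$; it follows $\phi$ if it vanishes identically after substituting $X_i=p_i(\mathbf{t})$. An inversion matrix of $\phi$ is a $d\times(d-1)$ matrix $\mathbb{M}$ with entries in $\mathbb{K}[\underline{X}]$ such that: (i) there exist $m\ge1$ and distinct monomials $\mathbf{t}^{\alpha_1},\dots,\mathbf{t}^{\alpha_d}$ of degree $m$ (indexing the rows) with ${}^t\mathbb{M}(\mathbf{t}^{\alpha_1},\dots,\mathbf{t}^{\alpha_d})^t=(M_1,\dots,M_{d-1})^t$, each $M_i$ a moving surface of bi-degree $(m;d_i)$ following $\phi$, and there exist $\mathbf{t}^{\beta_1},\mathbf{t}^{\beta_2},\mathbf{t}^{\beta_3}$ among the $\mathbf{t}^{\alpha_i}$ with $t_1\mathbf{t}^{\beta_3}=t_3\mathbf{t}^{\beta_1}$ and $t_2\mathbf{t}^{\beta_3}=t_3\mathbf{t}^{\beta_2}$; (ii) the rank of $\mathbb{M}$ over $\mathbb{K}(S)$ is exactly $d-1$. An implicitization matrix of $\phi$ is a square $d\times d$ matrix $\mathbb{M}$ with entries in $\mathbb{K}[\underline{X}]$ such that: (1) there exist $m\ge1$ and distinct monomials $\mathbf{t}^{\alpha_1},\dots,\mathbf{t}^{\alpha_d}$ of degree $m$ (indexing the rows) with ${}^t\mathbb{M}(\mathbf{t}^{\alpha_1},\dots,\mathbf{t}^{\alpha_d})^t=(P(\mathbf{t};\underline{X}),M_1,\dots,M_{d-1})^t$,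 where each $M_i$ is a moving surface of bi-degree $(m;d_i)$ following $\phi$ and $P$ is a bihomogeneous polynomial of positive degree in $\underline{X}$, and there exist $\mathbf{t}^{\beta_1},\mathbf{t}^{\beta_2},\mathbf{t}^{\beta_3}$ among the $\mathbf{t}^{\alpha_i}$ with $t_1\mathbf{t}^{\beta_3}=t_3\mathbf{t}^{\beta_1}$ and $t_2\mathbf{t}^{\beta_3}=t_3\mathbf{t}^{\beta_2}$; (2) $\det(\mathbb{M})=c\,F^\delta$ with $\delta\ge1$ an integer and $c\in\mathbb{K}\setminus\{0\}$; (3) if $\phi$ is birational then $\delta=1$. *)

From HB Require Import structures.
From mathcomp Require Import all_boot all_order all_algebra.
From mathcomp Require Import mpoly.
Set Implicit Arguments. Unset Strict Implicit. Unset Printing Implicit Defensive.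
Import Order.TTheory GRing.Theory.
Local Open Scope ring_scope.

Section Defs.
Variable K : fieldType.

(* Parametrization phi = (p_1 : ... : p_4) with p_i in K[t1,t2,t3];
   variables t1,t2,t3 are 'X_0,'X_1,'X_2 and X1..X4 are 'X_0..'X_3. *)
Definition param := 'I_4 -> {mpoly K[3]}.

Definition evp (p : param) (G : {mpoly K[4]}) : {mpoly K[3]} :=
  G \mPo [tuple p i | i < 4].

Definition mdvd (F G : {mpoly K[4]}) : Prop := exists H, G = F * H.

(* irreducible: non constant, and every factorization has a constant factor
   (the units of K[X] are the nonzero constants) *)
Definition mirreducible (F : {mpoly K[4]}) : Prop :=
  (1 < msize F)%N /\
  forall G H : {mpoly K[4]}, F = G * H -> (msize G <= 1)%N \/ (msize H <= 1)%N.

Definition alg_indep3 (q : 'I_3 -> {mpoly K[3]}) : Prop :=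
  forall G : {mpoly K[3]}, G \mPo [tuple q i | i < 3] = 0 -> G = 0.

(* phi generically finite <=> closure of image is a surface
   <=> trdeg_K K(p_1,..,p_4) = 3 <=> three of the p_i are alg. independent *)
Definition generically_finite (p : param) : Prop :=
  exists f : 'I_3 -> 'I_4, injective f /\ alg_indep3 (fun i => p (f i)).

Definition implicit_equation (p : param) (F : {mpoly K[4]}) : Prop :=
  exists k : nat, F \is k.-homog /\ mirreducible F /\ evp p F = 0 /\
    forall (G : {mpoly K[4]}) (j : nat),
      G \is j.-homog -> mirreducible G -> evp p G = 0 -> (k <= j)%N.

(* phi birational: it has a rational inverse psi = (A_1 : A_2 : A_3) defined on S
   with psi o phi = id, i.e. (A_1(p):A_2(p):A_3(p)) = (t1:t2:t3). *)
Definition birational (p : param) : Prop :=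
  exists (k : nat) (A : 'I_3 -> {mpoly K[4]}),
    (forall i, A i \is k.-homog) /\ (exists i, evp p (A i) != 0) /\
    forall i j : 'I_3, evp p (A i) * 'X_j = evp p (A j) * 'X_i.

(* rank over K(S) = Frac(K[X]/(F)): largest size of a minor that is nonzero
   modulo F *)
Definition nz_minor_S (F : {mpoly K[4]}) m n (A : 'M[{mpoly K[4]}]_(m, n)) (r : nat)
  : Prop :=
  exists (f : 'I_r -> 'I_m) (g : 'I_r -> 'I_n),
    injective f /\ injective g /\ ~ mdvd F (\det (mxsub f g A)).

Definition rank_S (F : {mpoly K[4]}) m n (A : 'M[{mpoly K[4]}]_(m, n)) (r : nat)
  : Prop := nz_minor_S F A r /\ ~ nz_minor_S F A r.+1.

(* column j of A, with rows indexed by the monomials t^(alpha i), is the moving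
   surface  sum_i A i j t^(alpha i) ; it follows phi: *)
Definition col_follows (p : param) m n (A : 'M[{mpoly K[4]}]_(m, n))
  (alpha : 'I_m -> 'X_{1..3}) (j : 'I_n) : Prop :=
  \sum_(i < m) evp p (A i j) * 'X_[alpha i] = 0.

Definition row_monomials m (mt : nat) (alpha : 'I_m -> 'X_{1..3}) : Prop :=
  (1 <= mt)%N /\ injective alpha /\ (forall i, mdeg (alpha i) = mt) /\
  exists b1 b2 b3 : 'I_m,
    'X_0 * 'X_[alpha b3] = 'X_2 * 'X_[alpha b1] :> {mpoly K[3]} /\
    'X_1 * 'X_[alpha b3] = 'X_2 * 'X_[alpha b2] :> {mpoly K[3]}.

Definition col_homog m n (A : 'M[{mpoly K[4]}]_(m, n)) (j : 'I_n) : Prop :=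
  exists dj : nat, (1 <= dj)%N /\ forall i, A i j \is dj.-homog.

Definition inversion_matrix (p : param) (F : {mpoly K[4]}) n
  (M : 'M[{mpoly K[4]}]_(n.+1, n)) : Prop :=
  (exists (mt : nat) (alpha : 'I_n.+1 -> 'X_{1..3}),
     row_monomials mt alpha /\
     forall j, col_homog M j /\ col_follows p M alpha j) /\
  rank_S F M n.

(* implicitization matrix, d = n.+1; column 0 is P, the others are M_1..M_{d-1} *)
Definition implicitization_matrix (p : param) (F : {mpoly K[4]}) n
  (M : 'M[{mpoly K[4]}]_(n.+1)) : Prop :=
  (exists (mt : nat) (alpha : 'I_n.+1 -> 'X_{1..3}),
     row_monomials mt alpha /\
     col_homog M 0 /\
     forall j : 'I_n, col_homog M (lift 0 j) /\ col_follows p M alpha (lift 0 j)) /\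
  (exists (delta : nat) (c : K), (1 <= delta)%N /\ c != 0 /\
     \det M = c *: F ^+ delta) /\
  (forall delta c, c != 0 -> \det M = c *: F ^+ delta -> birational p -> delta = 1%N).

Definition is_gcd_of k (a : 'I_k -> {mpoly K[4]}) (G : {mpoly K[4]}) : Prop :=
  (forall i, mdvd G (a i)) /\
  forall H, (forall i, mdvd H (a i)) -> mdvd H G.

End Defs.

From HB Require Import structures.
From mathcomp Require Import all_boot all_order all_algebra all_fingroup.
From mathcomp Require Import mpoly.
From Stdlib Require Import Classical.
From mathcomp Require Import zify ring.
Set Implicit Arguments. Unset Strict Implicit. Unset Printing Implicit Defensive.
Import Order.TTheory GRing.Theory.
Local Open Scope ring_scope.

(* Write D_i for the maximal minors of M*.  A common divisor of the D_i
   divides det M = c F^delta (expand along the first column), and F is prime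
   because K[X] is factorial, so gcd(D_i) = F^k.  If phi is birational then
   delta = 1; were F to divide every D_i, det M / F = sum_i (+-M_i0 D_i / F)
   would vanish at the origin since the first column is homogeneous of
   positive degree, contradicting det M / F = c.  Conversely, if F does not
   divide D_a then D_a(p) != 0, as F generates the ideal of S; Cramer's rule
   makes the signed minors D_i(p) proportional to the row monomials t^alpha_i,
   so (D_b1 : D_b2 : D_b3)(p) = (t1 : t2 : t3) and phi is birational.
   Finally M* has rank d - 1 over K(S) iff some D_i is not a multiple of F,
   i.e. iff k = 0. *)

Lemma ex_least (P : nat -> Prop) :
  (exists n, P n) -> exists n, P n /\ forall m, (m < n)%N -> ~ P m.
Proof.
move=> [n Pn]; apply: NNPP => none; move: Pn; elim/ltn_ind: n => n IH Pn.
by apply: none; exists n; split=> // m /IH.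
Qed.

Lemma ex_greatest (P : nat -> Prop) d :
  P 0%N -> (forall j, P j -> (j <= d)%N) ->
  exists k, P k /\ forall j, P j -> (j <= k)%N.
Proof.
move=> P0 ub; have [|m [Pm minm]] := @ex_least (fun m => P (d - m)%N).
  by exists d; rewrite subnn.
exists (d - m)%N; split=> // j Pj; rewrite leqNgt; apply/negP => ltj.
have ledj := ub j Pj; apply: (minm (d - j)%N); first by lia.
by rewrite subKn.
Qed.

Section Divisibility.
Variable R : idomainType.
Implicit Types a b c u x : R.

Definition dvdr a b : Prop := exists c, b = a * c.

Definition irreducible_elt a : Prop :=
  [/\ a != 0, a \isn't a GRing.unit &
      forall b c, a = b * c -> b \is a GRing.unit \/ c \is a GRing.unit].

Definition prime_elt a : Prop :=
  [/\ a != 0, a \isn't a GRing.unit &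
      forall b c, dvdr a (b * c) -> dvdr a b \/ dvdr a c].

Definition factorial_ring : Prop :=
  forall a, a != 0 -> exists u (s : seq R),
    [/\ u \is a GRing.unit, forall x, x \in s -> prime_elt x &
        a = u * \prod_(x <- s) x].

Definition irreducibles_prime : Prop :=
  forall a, irreducible_elt a -> prime_elt a.

Lemma dvdr0 a : dvdr a 0. Proof. by exists 0; rewrite mulr0. Qed.

Lemma dvdr_trans a b c : dvdr a b -> dvdr b c -> dvdr a c.
Proof. by move=> [x ->] [y ->]; exists (x * y); rewrite mulrA. Qed.

Lemma dvdr_mulr a b c : dvdr a b -> dvdr a (b * c).
Proof. by move=> [x ->]; exists (x * c); rewrite mulrA. Qed.

Lemma dvdr_mull a b c : dvdr a b -> dvdr a (c * b).
Proof. by rewrite mulrC; apply: dvdr_mulr. Qed.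

Lemma dvdrD a b c : dvdr a b -> dvdr a c -> dvdr a (b + c).
Proof. by move=> [x ->] [y ->]; exists (x + y); rewrite mulrDr. Qed.

Lemma dvdrB a b c : dvdr a b -> dvdr a c -> dvdr a (b - c).
Proof. by move=> ab [y ->]; apply: dvdrD ab _; exists (- y); rewrite mulrN. Qed.

Lemma dvdr_sum I (r : seq I) (P : pred I) (f : I -> R) a :
  (forall i, P i -> dvdr a (f i)) -> dvdr a (\sum_(i <- r | P i) f i).
Proof. by move=> h; apply: big_ind => //; [exact: dvdr0 | exact: dvdrD]. Qed.

Lemma dvdr_unitl a u b : u \is a GRing.unit -> dvdr a (u * b) -> dvdr a b.
Proof.
by move=> uu [x e]; exists (u^-1 * x); rewrite mulrCA -e mulKr.
Qed.

Lemma prime_of_irreducible : factorial_ring -> irreducibles_prime.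
Proof.
move=> fact a [a0 aNu airr]; have [u [[|x s] [uu ps ea]]] := fact a a0.
  by rewrite ea big_nil mulr1 uu in aNu.
move: ea; rewrite big_cons mulrCA; set w := u * _ => ea.
have [x0 xNu xP] := ps x (mem_head x s).
have [xu|wu] := airr x w ea; first by rewrite xu in xNu.
have x_dvd_a y : dvdr x y -> dvdr a y.
  by move=> [z ->]; exists (w^-1 * z); rewrite ea -mulrA mulVKr.
split=> // b c abc.
by case: (xP b c (dvdr_trans (ex_intro _ w ea) abc)) => /x_dvd_a; [left|right].
Qed.

Lemma factorial_ind (P : R -> Prop) : factorial_ring ->
  (forall u, u \is a GRing.unit -> P u) ->
  (forall x c, prime_elt x -> P c -> P (x * c)) ->
  forall c, c != 0 -> P c.
Proof.
move=> fact Punit Pmul c /fact [u [s [uu ps ->]]].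
elim: s ps => [|x s IH] ps; first by rewrite big_nil mulr1; exact: Punit.
rewrite big_cons mulrCA; apply: Pmul; first exact/ps/mem_head.
by apply: IH => y ys; apply/ps; rewrite inE ys orbT.
Qed.

End Divisibility.

Section RingIsomorphism.
Variables (B C : idomainType) (f : {rmorphism B -> C}).
Hypothesis f_bij : bijective f.

Lemma rmorph_unitE a : (f a \is a GRing.unit) = (a \is a GRing.unit).
Proof.
apply/idP/idP => [|/(rmorph_unit f) //].
have [g fK gK] := f_bij; move=> /unitrPr [y fay]; apply/unitrPr.
by exists (g y); apply: (bij_inj f_bij); rewrite rmorphM gK fay rmorph1.
Qed.

Lemma dvdr_rmorph a b : dvdr (f a) (f b) <-> dvdr a b.
Proof.
have [g fK gK] := f_bij.
split=> [[y e]|[x ->]]; last by exists (f x); rewrite rmorphM.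
by exists (g y); apply: (bij_inj f_bij); rewrite rmorphM gK.
Qed.

Lemma irreducible_rmorph a : irreducible_elt a -> irreducible_elt (f a).
Proof.
have [g fK gK] := f_bij.
move=> [a0 aNu airr]; split.
- by rewrite -(rmorph0 f) (inj_eq (bij_inj f_bij)).
- by rewrite rmorph_unitE.
- move=> b c e; rewrite -(gK b) -(gK c) !rmorph_unitE; apply: airr.
  by apply: (bij_inj f_bij); rewrite rmorphM !gK.
Qed.

Lemma prime_rmorphK a : prime_elt (f a) -> prime_elt a.
Proof.
move=> [fa0 faNu faP]; split.
- by apply: contraNneq fa0 => ->; rewrite rmorph0.
- by rewrite -rmorph_unitE.
- by move=> b c /dvdr_rmorph; rewrite rmorphM => /faP [] /dvdr_rmorph; [left|right].
Qed.

Lemma irreducibles_prime_rmorph : irreducibles_prime C -> irreducibles_prime B.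
Proof. by move=> irrP a /irreducible_rmorph /irrP /prime_rmorphK. Qed.

End RingIsomorphism.

Section Polynomials.
Variable A : idomainType.
Implicit Types (c r x : A) (F P Q W : {poly A}).

Lemma polyC_unitE c : (c%:P \is a GRing.unit) = (c \is a GRing.unit).
Proof.
rewrite poly_unitE coefC /= size_polyC.
by have [->|] := eqVneq c 0; rewrite ?unitr0.
Qed.

Lemma size_poly_unit P : P \is a GRing.unit -> size P = 1%N.
Proof. by rewrite poly_unitE => /andP[/eqP]. Qed.

Lemma dvdr_polyC c P : dvdr c%:P P <-> forall i, dvdr c P`_i.
Proof.
split=> [[Q ->] i|dvdP]; first by rewrite coefCM; exists Q`_i.
have coefq i : exists y, P`_i == c * y by have [y ->] := dvdP i; exists y.
exists (\poly_(i < size P) xchoose (coefq i)); apply/polyP => i.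
rewrite coefCM coef_poly; case: ltnP => [_|leP]; first exact/eqP/(xchooseP (coefq i)).
by rewrite mulr0 nth_default.
Qed.

(* Gauss's lemma: the first coefficients of P and Q not divisible by c
   produce a coefficient of P * Q not divisible by c. *)
Lemma prime_polyC c : prime_elt c -> prime_elt c%:P.
Proof.
move=> [c0 cNu cP]; split; [by rewrite polyC_eq0 | by rewrite polyC_unitE |].
move=> P Q /dvdr_polyC cPQ; apply: NNPP => /not_or_and [/dvdr_polyC nP /dvdr_polyC nQ].
have first_ndvd S : ~ (forall i, dvdr c S`_i) ->
    exists i, ~ dvdr c S`_i /\ forall m, (m < i)%N -> dvdr c S`_m.
  move=> nS; have [|i [ni mini]] := @ex_least (fun i => ~ dvdr c S`_i).
    by apply: NNPP => all; apply: nS => i; apply: NNPP => ni; apply: all; exists i.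
  by exists i; split=> // m /mini /NNPP.
have [i [ni mini]] := first_ndvd _ nP; have [j [nj minj]] := first_ndvd _ nQ.
have := cPQ (i + j)%N; rewrite coefM (bigD1 (Ordinal (leq_addr j i.+1))) //= addKn.
have others : dvdr c (\sum_(k < (i + j).+1 | k != Ordinal (leq_addr j i.+1))
                        P`_k * Q`_(i + j - k)).
  apply: dvdr_sum => k; rewrite -val_eqE /= => neki.
  have [ltki|ltik|/eqP] := ltngtP k i; last by rewrite (negbTE neki).
    exact/dvdr_mulr/mini.
  by apply/dvdr_mull/minj; have := ltn_ord k; lia.
by move=> /dvdrB /(_ others); rewrite addrK => /cP [].
Qed.

Lemma polyC_ndvd_irreducible x F :
  irreducible_elt F -> (1 < size F)%N -> x != 0 -> x \isn't a GRing.unit ->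
  ~ dvdr x%:P F.
Proof.
move=> [_ _ Firr] sF x0 xNu [F' eF]; have [|/size_poly_unit] := Firr _ _ eF.
  by rewrite polyC_unitE (negbTE xNu).
by move: sF; rewrite eF size_Cmul // => /[swap] ->.
Qed.

Section Factorial.
Hypothesis A_fact : factorial_ring A.
Variable F : {poly A}.
Hypothesis F_irr : irreducible_elt F.

Lemma irreducible_dvdr_cancel_polyC c :
  (1 < size F)%N -> c != 0 -> forall W, dvdr F (c%:P * W) -> dvdr F W.
Proof.
move=> sF; move: c; apply: (factorial_ind A_fact) => [u uu|x c xP IH] W.
  by apply: dvdr_unitl; rewrite polyC_unitE.
rewrite polyCM -mulrA => -[Q eQ].
have [x0 xNu _] := xP; have [_ _ xCP] := prime_polyC xP.
have [|/polyC_ndvd_irreducible|[Q' eQ']] := xCP F Q; first by exists (c%:P * W).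
  by move/(_ F_irr sF x0 xNu).
by apply: IH; exists Q'; apply: (mulfI (x := x%:P)); rewrite ?polyC_eq0 // eQ eQ' mulrCA.
Qed.

Lemma irreducible_dvdr_factor_polyC c :
  c != 0 -> forall Q R, c%:P * F = Q * R -> (1 < size R)%N -> dvdr F R.
Proof.
move: c; apply: (factorial_ind A_fact) => [u uu|x c xP IH] Q R e sR.
  have [_ _ Firr] := F_irr.
  have eF : F = (u^-1%:P * Q) * R.
    by rewrite -mulrA -e mulrA -polyCM mulVr ?mul1r.
  have [uQ|/size_poly_unit sR1] := Firr _ _ eF; last by rewrite sR1 in sR.
  by exists (u^-1%:P * Q)^-1; rewrite eF [RHS]mulrC mulKr.
move: e; rewrite polyCM -mulrA => e.
have [x0 _ _] := xP; have [_ _ xCP] := prime_polyC xP.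
have x0P : x%:P != 0 by rewrite polyC_eq0.
have [[Q' eQ]|[R' eR]] := xCP Q R (ex_intro _ _ (esym e)).
  by apply: (IH Q') => //; apply: (mulfI x0P); rewrite e eQ mulrA.
have sR' : (1 < size R')%N by move: sR; rewrite eR size_Cmul.
have eR'F : c%:P * F = Q * R' by apply: (mulfI x0P); rewrite e eR mulrCA.
have [y eR'] := IH Q R' eR'F sR'.
by rewrite eR eR'; exists (x%:P * y); rewrite mulrCA.
Qed.

(* Bezout: a nonzero combination u F + v G of minimal size pseudo-divides
   both F and G, so it must be a constant. *)
Lemma irreducible_polyC_bezout G : (1 < size F)%N -> ~ dvdr F G ->
  exists r u v, r != 0 /\ u * F + v * G = r%:P.
Proof.
move=> sF nFG; apply: NNPP => nocst.
have [|s [[u0 [v0 [R0nz sR0]]] mins]] := @ex_least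
    (fun s => exists u v, u * F + v * G != 0 /\ size (u * F + v * G) = s).
  by exists (size F), 1, 0; rewrite mul1r mul0r addr0; have [] := F_irr.
set R0 := u0 * F + v0 * G in R0nz sR0.
have pdiv X a b : a * F + b * G = X ->
    exists k q, (lead_coef R0 ^+ k)%:P * X = q * R0.
  move=> eX; exists (scalp X R0), (X %/ R0).
  set cc := (lead_coef R0 ^+ scalp X R0)%:P.
  have eXR0 : X %% R0 = (a * cc - X %/ R0 * u0) * F + (b * cc - X %/ R0 * v0) * G.
    have -> : X %% R0 = (lead_coef R0 ^+ scalp X R0) *: X - X %/ R0 * R0.
      by rewrite Pdiv.Idomain.divp_eq addrAC subrr add0r.
    by rewrite -mul_polyC -/cc -eX /R0; ring.
  have rem0 : X %% R0 = 0.
    apply: NNPP => /eqP remnz; apply: (mins (size (X %% R0))).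
      by rewrite -sR0 ltn_modp.
    by exists (a * cc - X %/ R0 * u0), (b * cc - X %/ R0 * v0); rewrite -eXR0.
  by rewrite mul_polyC Pdiv.Idomain.divp_eq rem0 addr0.
have sR0gt1 : (1 < size R0)%N.
  rewrite ltnNge; apply/negP => /size1_polyC eR0; apply: nocst.
  exists R0`_0, u0, v0; split; last exact: eR0.
  by apply: contraNneq R0nz => c0; rewrite eR0 c0.
have [k [q eFq]] := pdiv F 1 0 ltac:(by rewrite mul1r mul0r addr0).
have [k' [q' eGq]] := pdiv G 0 1 ltac:(by rewrite mul0r mul1r add0r).
have lc0 j : lead_coef R0 ^+ j != 0 by rewrite expf_neq0 // lead_coef_eq0.
have [y eR0] := irreducible_dvdr_factor_polyC (lc0 k) eFq sR0gt1.
apply/nFG/(irreducible_dvdr_cancel_polyC sF (lc0 k')).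
by rewrite eGq eR0; exists (q' * y); rewrite mulrCA.
Qed.

End Factorial.

Lemma poly_irreducibles_prime : factorial_ring A -> irreducibles_prime {poly A}.
Proof.
move=> A_fact F F_irr; have [F0 FNu _] := F_irr.
have [sF|sF] := ltnP 1 (size F).
  split=> // G H FGH; apply: NNPP => /not_or_and [nG nH]; apply: nH.
  have [r [u [v [r0 e]]]] := irreducible_polyC_bezout A_fact F_irr sF nG.
  apply: (irreducible_dvdr_cancel_polyC A_fact F_irr sF r0); rewrite -e mulrDl.
  by apply: dvdrD; [exists (u * H); ring | rewrite -mulrA; exact: dvdr_mull].
have /size_poly1P [c c0 eF] : size F == 1%N.
  by rewrite eqn_leq sF lt0n size_poly_eq0.
rewrite eF; apply/prime_polyC/(prime_of_irreducible A_fact).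
move: F_irr; rewrite eF => -[_ cNu cirr]; split=> //; first by rewrite -polyC_unitE.
by move=> b d e; rewrite -!polyC_unitE; apply: cirr; rewrite e polyCM.
Qed.

End Polynomials.

Section MultivariatePolynomials.
Variable K : fieldType.

Lemma mpoly_unitE n (p : {mpoly K[n]}) :
  (p \is a GRing.unit) = (p != 0) && (msize p <= 1)%N.
Proof.
have -> : (p \is a GRing.unit) = (p == (p@_0)%:MP) && (p@_0 != 0).
  by rewrite -unitfE.
apply/andP/andP => [[/eqP ep c0]|[p0 /msize1_polyC ep]].
  by rewrite ep mpolyC_eq0 msizeC c0.
by rewrite -ep; split=> //; apply: contraNneq p0 => c0; rewrite ep c0.
Qed.

Lemma mpoly_factorial_of_irreducibles_prime n :
  irreducibles_prime {mpoly K[n]} -> factorial_ring {mpoly K[n]}.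
Proof.
move=> irrP a; have [k] := ubnP (msize a).
elim: k a => // k IH a; rewrite ltnS => ak a0.
have [au|aNu] := boolP (a \is a GRing.unit).
  by exists a, [::]; rewrite big_nil mulr1.
have [airr|nirr] := classic (irreducible_elt a).
  exists 1, [:: a]; rewrite big_seq1 mul1r unitr1; split=> // x.
  by rewrite inE => /eqP ->; exact: irrP.
have [b [c [e bNu cNu]]] : exists b c,
    [/\ a = b * c, b \isn't a GRing.unit & c \isn't a GRing.unit].
  apply: NNPP => nfact; apply: nirr; split=> // b c e.
  apply: NNPP => /not_or_and [bNu cNu]; apply: nfact.
  by exists b, c; split=> //; exact/negP.
have b0 : b != 0 by apply: contraNneq a0 => b0; rewrite e b0 mul0r.
have c0 : c != 0 by apply: contraNneq a0 => c0; rewrite e c0 mulr0.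
have sb : (1 < msize b)%N by move: bNu; rewrite mpoly_unitE b0 -ltnNge.
have sc : (1 < msize c)%N by move: cNu; rewrite mpoly_unitE c0 -ltnNge.
have sa : msize a = (msize b + msize c).-1 by rewrite e msizeM.
have [ub [sb' [ubu psb eb]]] := IH b ltac:(lia) b0.
have [uc [sc' [ucu psc ec]]] := IH c ltac:(lia) c0.
exists (ub * uc), (sb' ++ sc'); split; first by rewrite unitrM ubu ucu.
  by move=> x; rewrite mem_cat => /orP [/psb|/psc].
by rewrite big_cat /= e eb ec; ring.
Qed.

Lemma msym_bij n (s : 'S_n) : bijective (@msym n K s).
Proof. by exists (msym s^-1) => p; rewrite -msymMm ?mulgV ?mulVg msym1m. Qed.

Lemma mwiden_mPo n k (r : {mpoly K[n]}) (T : n.+1.-tuple {mpoly K[k]}) :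
  mwiden r \mPo T = r \mPo [tuple tnth T (widen_ord (leqnSn n) i) | i < n].
Proof.
elim/mpolyind: r => [|c m q _ _ IH]; first by rewrite raddf0 !comp_mpoly0.
rewrite raddfD /= !comp_mpolyD IH; congr (_ + _).
rewrite -mul_mpolyC rmorphM /= mwidenC mwidenX !mul_mpolyC !comp_mpolyZ.
rewrite !comp_mpolyX big_ord_recr /= mnmwiden_ordmax expr0 mulr1.
by congr (_ *: _); apply: eq_bigr => i _; rewrite mnmwiden_widen tnth_mktuple.
Qed.

Section Muni.
Variable n : nat.

Let mres (m : 'X_{1..n.+1}) : 'X_{1..n} :=
  [multinom m (widen_ord (leqnSn n) i) | i < n].

Lemma muniX (m : 'X_{1..n.+1}) :
  muni ('X_[m] : {mpoly K[n.+1]}) = 'X_[mres m] *: 'X^(m ord_max).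
Proof. by rewrite muniE msuppX big_seq1 mcoeffX eqxx scale1r. Qed.

Lemma mres_eq (m m' : 'X_{1..n.+1}) :
  (m == m') = (mres m == mres m') && (m ord_max == m' ord_max).
Proof.
apply/eqP/andP => [-> //|[/eqP/mnmP e1 /eqP e2]]; apply/mnmP => i.
have [ltin|lein] := ltnP i n; last first.
  by have -> : i = ord_max by apply: val_inj => /=; have := ltn_ord i; lia.
have := e1 (Ordinal ltin); rewrite !mnmE.
by have -> : widen_ord (leqnSn n) (Ordinal ltin) = i by exact: val_inj.
Qed.

Lemma coef_muni (p : {mpoly K[n.+1]}) (m : 'X_{1..n.+1}) :
  ((muni p)`_(m ord_max))@_(mres m) = p@_m.
Proof.
rewrite muniE coef_sum raddf_sum /=.
transitivity (mcoeff m (\sum_(m' <- msupp p) p@_m' *: 'X_[m'])); last first.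
  by rewrite -mpolyE.
rewrite raddf_sum /=; apply: eq_bigr => m' _.
rewrite coefZ coefXn [RHS]mcoeffZ mcoeffX mres_eq [m' ord_max == _]eq_sym.
case: (m ord_max == m' ord_max); rewrite ?andbT ?andbF ?mulr1 ?mulr0 ?mcoeff0 //.
by rewrite mcoeffZ mcoeffX.
Qed.

Lemma muni_inj : injective (@muni n K).
Proof. by move=> p q e; apply/mpolyP => m; rewrite -!coef_muni e. Qed.

Lemma muni_mwiden (c : {mpoly K[n]}) : muni (mwiden c) = c%:P.
Proof.
elim/mpolyind: c => [|c m q _ _ IH]; first by rewrite !raddf0.
rewrite raddfD /= muniD IH polyCD; congr (_ + _).
rewrite -mul_mpolyC rmorphM /= mwidenC mwidenX muniM muniC muniX.
have -> : mres (mnmwiden m) = m.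
  by apply/mnmP => i; rewrite mnmE mnmwiden_widen.
by rewrite mnmwiden_ordmax expr0 alg_polyC -polyCM mul_mpolyC.
Qed.

Lemma muni_Xmax : muni ('X_ord_max : {mpoly K[n.+1]}) = 'X.
Proof.
rewrite muniX mnm1E eqxx expr1.
have -> : mres U_(ord_max) = 0%MM.
  apply/mnmP => i; rewrite /mres !mnmE.
  by case: eqP => // /(congr1 val) /=; have := ltn_ord i; lia.
by rewrite mpolyX0 scale1r.
Qed.

Lemma mmultiK : cancel (@mmulti n K) (@muni n K).
Proof.
move=> q; rewrite -[RHS]coefK poly_def raddf_sum /=; apply: eq_bigr => i _.
by rewrite muniM muni_mwiden rmorphXn /= muni_Xmax mul_polyC.
Qed.

Lemma muni_bij : bijective (@muni n K).
Proof.
by exists (@mmulti n K) => [p|]; [apply: muni_inj; rewrite mmultiK | exact: mmultiK].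
Qed.

End Muni.

Lemma mpoly_irreducibles_prime n : irreducibles_prime {mpoly K[n]}.
Proof.
elim: n => [|n IH].
  move=> p [p0 pNu _]; case/negP: pNu; rewrite mpoly_unitE p0.
  have -> : p = (p@_0)%:MP.
    apply/mpolyP => m; rewrite mcoeffC.
    have -> : m = 0%MM by apply/mnmP => -[].
    by rewrite eqxx mulr1.
  by rewrite msizeC; case: (_ != 0).
apply: (irreducibles_prime_rmorph (muni_bij n)).
exact/poly_irreducibles_prime/mpoly_factorial_of_irreducibles_prime.
Qed.

Lemma mpoly_factorial n : factorial_ring {mpoly K[n]}.
Proof. exact/mpoly_factorial_of_irreducibles_prime/mpoly_irreducibles_prime. Qed.

End MultivariatePolynomials.

Lemma ord_lift_decomp n (f : 'I_n -> 'I_n.+1) : injective f ->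
  exists (z : 'I_n.+1) (s : 'S_n), forall i, f i = lift z (s i).
Proof.
move=> finj; have [z zf] : exists z, z \notin codom f.
  apply/existsP; apply: contraT; rewrite negb_exists => /forallP allf.
  have : (#|'I_n.+1| <= #|codom f|)%N.
    by apply/subset_leq_card/subsetP => z _; have := allf z; rewrite negbK.
  by rewrite card_codom // !card_ord ltnn.
have fz i : z != f i by apply: contraNneq zf => ->; exact: codom_f.
pose t i := odflt i (unlift z (f i)).
have ft i : f i = lift z (t i) by rewrite /t; case: (unlift_some (fz i)) => j -> ->.
have tinj : injective t by move=> i j eq; apply: finj; rewrite !ft eq.
by exists z, (perm tinj) => i; rewrite permE.
Qed.

HB.instance Definition _ (K : fieldType) (p : param K) :=
  GRing.RMorphism.copy (evp p) (comp_mpoly [tuple p i | i < 4]).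

Section ImplicitEquation.
Variable K : fieldType.

Lemma mirreducible_irreducible (F : {mpoly K[4]}) :
  mirreducible F -> irreducible_elt F.
Proof.
move=> [sF Firr]; have F0 : F != 0 by rewrite -msize_poly_eq0 -lt0n ltnW.
split=> //; first by rewrite mpoly_unitE F0 -ltnNge.
move=> b c e.
have b0 : b != 0 by apply: contraNneq F0 => b0; rewrite e b0 mul0r.
have c0 : c != 0 by apply: contraNneq F0 => c0; rewrite e c0 mulr0.
by rewrite !mpoly_unitE b0 c0; exact: Firr.
Qed.

(* Renaming the variables so that three algebraically independent p_i come
   first identifies K[X] with A[Y], A = K[3].  There F has positive degree,
   and if F did not divide G a Bezout relation u F + v G = r with 0 != r in A
   would give r(p) = 0. *)
Lemma evp_eq0_dvd (p : param K) (F G : {mpoly K[4]}) :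
  generically_finite p -> mirreducible F -> evp p F = 0 -> evp p G = 0 ->
  mdvd F G.
Proof.
move=> [f [finj indep]] /mirreducible_irreducible F_irr eF eG.
have [z [s fs]] := ord_lift_decomp finj.
pose t := lift_perm ord_max z s.
have tf i : t (widen_ord (leqnSn 3) i) = f i.
  have -> : widen_ord (leqnSn 3) i = lift ord_max i.
    by apply: val_inj; rewrite /= /bump leqNgt ltn_ord.
  by rewrite lift_perm_lift fs.
pose Phi : {rmorphism {mpoly K[4]} -> {poly {mpoly K[3]}}} := @muni 3 K \o msym t^-1.
have Phi_bij : bijective Phi := bij_comp (muni_bij K 3) (msym_bij K t^-1%g).
pose E (r : {mpoly K[3]}) : {mpoly K[4]} := msym t (mwiden r).
have PhiE r : Phi (E r) = r%:P.
  by rewrite /= /E -msymMm mulgV msym1m muni_mwiden.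
have evpE r : evp p (E r) = r \mPo [tuple p (f i) | i < 3].
  rewrite /evp /E msym_mPo mwiden_mPo; congr (_ \mPo _).
  by apply: eq_mktuple => i; rewrite !tnth_mktuple tf.
have PF_irr := irreducible_rmorph Phi_bij F_irr.
have sPF : (1 < size (Phi F))%N.
  rewrite ltnNge; apply/negP => /size1_polyC ePF; have [F0 _ _] := F_irr.
  have eFE : F = E (Phi F)`_0 by apply: (bij_inj Phi_bij); rewrite PhiE.
  move: F0 eF; rewrite eFE evpE => /[swap] /indep ->.
  by rewrite /E mwiden0 msym0 eqxx.
apply/(dvdr_rmorph Phi_bij); apply: NNPP => nFG.
have [r [u [v [r0 e]]]] := irreducible_polyC_bezout (@mpoly_factorial K 3) PF_irr sPF nFG.
have [g PhiK gK] := Phi_bij.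
have : g u * F + g v * G = E r.
  by apply: (bij_inj Phi_bij); rewrite PhiE -e rmorphD !rmorphM !gK.
move/(congr1 (evp p)); rewrite evpE rmorphD !rmorphM /= eF eG !mulr0 addr0.
by move/esym/indep/eqP; rewrite (negbTE r0).
Qed.

End ImplicitEquation.

Section Homogeneity.
Variables (K : fieldType) (k : nat).

Lemma det_dhomog n (B : 'M[{mpoly K[k]}]_n) (d : 'I_n -> nat) :
  (forall i j, B i j \is (d j).-homog) -> \det B \is (\sum_j d j)%N.-homog.
Proof.
move=> homB; apply: rpred_sum => s _.
have -> : (\sum_j d j)%N = (\sum_i d (s i))%N.
  by rewrite (reindex_inj (@perm_inj _ s)).
rewrite -signr_odd; case: (odd _); rewrite ?expr1 ?expr0 ?mulN1r ?mul1r ?dhomogN;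
  by elim/big_rec2: _ => [|i m q _]; [exact: dhomog1 | exact: dhomogM].
Qed.

Lemma meval0_dhomog (P : {mpoly K[k]}) d :
  (0 < d)%N -> P \is d.-homog -> P.@[fun _ => 0] = 0.
Proof.
move=> d0 homP; rewrite mevalE big1_seq // => m /andP [_ mP].
have [i mi0] : exists i, (0 < m i)%N.
  apply: NNPP => none; have /= := dhomog_mf homP mP.
  rewrite mdegE big1 => [d0E|i _]; first by rewrite -d0E in d0.
  by apply/eqP; rewrite -leqn0 leqNgt; apply/negP => mi0; apply: none; exists i.
by rewrite (bigD1 i) //= expr0n -(prednK mi0) mul0r mulr0.
Qed.

End Homogeneity.

Lemma det_mxsub_row' (R : comPzRingType) n (A : 'M[R]_(n.+1, n))
    (f : 'I_n -> 'I_n.+1) (g : 'I_n -> 'I_n) : injective f -> injective g ->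
  exists i (b : bool), \det (mxsub f g A) = (-1) ^+ b * \det (row' i A).
Proof.
move=> finj ginj; have [z [s fs]] := ord_lift_decomp finj.
exists z, (odd_perm s (+) odd_perm (perm ginj)^-1).
have -> : mxsub f g A = col_perm (perm ginj) (row_perm s (row' z A)).
  by apply/matrixP => i j; rewrite !mxE permE fs.
by rewrite col_permE row_permE !det_mulmx !det_perm signr_addb mulrAC.
Qed.

(* Both sides are, up to sign, the determinant of [u | A] with
   u = v_a e_b - v_b e_a, which is singular since v [u | A] = 0. *)
Lemma left_kernel_minors (R : idomainType) n (A : 'M[R]_(n.+1, n))
    (v : 'rV[R]_n.+1) : v != 0 -> v *m A = 0 -> forall a b : 'I_n.+1,
  v 0 a * ((-1) ^+ b * \det (row' b A)) = v 0 b * ((-1) ^+ a * \det (row' a A)).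
Proof.
move=> v0 vA a b; set w := fun i : 'I_n.+1 => (-1) ^+ i * \det (row' i A).
pose u i := (i == b)%:R * v 0 a - (i == a)%:R * v 0 b.
pose Z := \matrix_(i, j) if unlift 0 j is Some j' then A i j' else u i.
have Z0 i : Z i 0 = u i by rewrite mxE unlift_none.
have ZA : col' 0 Z = A by apply/matrixP => i j; rewrite !mxE liftK.
have delta (c : 'I_n.+1) (h : 'I_n.+1 -> R) : \sum_i (i == c)%:R * h i = h c.
  by rewrite (bigD1 c) //= eqxx mul1r big1 ?addr0 // => i /negbTE ->; rewrite mul0r.
have detZ : \det Z = v 0 a * w b - v 0 b * w a.
  rewrite (expand_det_col Z 0) (eq_bigr (fun i => u i * w i)); last first.
    by move=> i _; rewrite Z0 /cofactor ZA addn0.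
  under eq_bigr => i _ do rewrite mulrBl -!mulrA.
  by rewrite sumrB !delta.
have vZ : v *m Z = 0.
  apply/matrixP => x j; rewrite ord1 !mxE; case: (unliftP 0 j) => [j' ->|->].
    rewrite (eq_bigr (fun i => v 0 i * A i j')) => [|i _]; last by rewrite mxE liftK.
    by have /matrixP/(_ 0 j') := vA; rewrite !mxE.
  under eq_bigr => i _ do rewrite mxE unlift_none mulrBr !(mulrCA (v 0 i)).
  by rewrite sumrB !delta mulrC subrr.
have : \det Z *: v = 0 by rewrite -mul_mx_scalar -mul_mx_adj mulmxA vZ mul0mx.
by move/eqP; rewrite scalemx_eq0 (negbTE v0) orbF detZ subr_eq0 => /eqP.
Qed.

Section PrimePowerGcd.
Variables (R : idomainType) (F : R).
Hypothesis F_prime : prime_elt F.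

Lemma dvdr_prime_expr d (H Q : R) : H * Q = F ^+ d ->
  exists j u, [/\ (j <= d)%N, u \is a GRing.unit & H = u * F ^+ j].
Proof.
have [F0 _ FP] := F_prime; elim: d H Q => [|d IH] H Q e.
  exists 0%N, H; rewrite expr0 mulr1; split=> //.
  by apply/unitrPr; exists Q; rewrite e.
have /FP [[H' eH]|[Q' eQ]] : dvdr F (H * Q) by rewrite e exprS; exists (F ^+ d).
  have /IH [j [u [jd uu eH']]] : H' * Q = F ^+ d.
    by apply: (mulfI F0); rewrite mulrA -eH e exprS.
  by exists j.+1, u; rewrite eH eH' exprS mulrCA.
have /IH [j [u [jd uu eH']]] : H * Q' = F ^+ d.
  by apply: (mulfI F0); rewrite mulrCA -eQ e exprS.
by exists j, u; split=> //; apply: leqW.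
Qed.

Lemma prime_expr_gcd m (a : 'I_m -> R) d :
  (forall H, (forall i, dvdr H (a i)) -> dvdr H (F ^+ d)) ->
  exists k, (forall i, dvdr (F ^+ k) (a i)) /\
            forall H, (forall i, dvdr H (a i)) -> dvdr H (F ^+ k).
Proof.
move=> common; pose P j := (j <= d)%N /\ forall i, dvdr (F ^+ j) (a i).
have [||k [[_ Fka] kmax]] := @ex_greatest P d; last first.
- exists k; split=> // H Ha; have [Q eQ] := common H Ha.
  have [j [u [jd uu eH]]] := dvdr_prime_expr (esym eQ).
  have jk : (j <= k)%N.
    apply: kmax; split=> // i; have [x ->] := Ha i.
    by exists (u * x); rewrite eH -mulrA mulrCA.
  by exists (u^-1 * F ^+ (k - j)); rewrite eH mulrACA divrr // mul1r -exprD subnKC.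
- by move=> j [].
- by split=> // i; rewrite expr0; exists (a i); rewrite mul1r.
Qed.

Lemma prime_expr_gcd_eq0 m (a : 'I_m -> R) k :
  (forall i, dvdr (F ^+ k) (a i)) ->
  (forall H, (forall i, dvdr H (a i)) -> dvdr H (F ^+ k)) ->
  k = 0%N <-> ~ (forall i, dvdr F (a i)).
Proof.
have [_ FNu _] := F_prime; move=> Fka gcd; split=> [k0 /gcd [y]|nFa].
  by rewrite k0 expr0 => /esym y1; case/negP: FNu; apply/unitrPr; exists y.
case: k Fka {gcd} => // k Fka; case: nFa => i; apply: dvdr_trans (Fka i).
by exists (F ^+ k); rewrite exprS.
Qed.

End PrimePowerGcd.

Lemma dvdr_det_cofactors (R : idomainType) n (M : 'M[R]_n.+1) H :
  (forall i, dvdr H (\det (row' i (col' 0 M)))) -> dvdr H (\det M).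
Proof.
move=> HD; rewrite (expand_det_col M 0); apply: dvdr_sum => i _.
by rewrite /cofactor; apply/dvdr_mull/dvdr_mull/HD.
Qed.

Lemma mpolyX_neq0 (R : nzRingType) n (m : 'X_{1..n}) : ('X_[m] : {mpoly R[n]}) != 0.
Proof.
apply/eqP => /(congr1 (mcoeff m)); rewrite mcoeffX eqxx mcoeff0 => /eqP.
by rewrite oner_eq0.
Qed.

Section ImplicitizationMatrices.
Variable K : fieldType.

Lemma rank_S_maximal_minors (F : {mpoly K[4]}) n (A : 'M[{mpoly K[4]}]_(n.+1, n)) :
  rank_S F A n <-> ~ (forall i, mdvd F (\det (row' i A))).
Proof.
split=> [[[f [g [finj [ginj nF]]]] _] Fall|nFall].
  have [i [b eb]] := det_mxsub_row' A finj ginj.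
  by apply: nF; rewrite eb; apply: dvdr_mull (Fall i).
split; last first.
  by move=> [f [g [_ [ginj _]]]]; have := leq_card g ginj; rewrite !card_ord ltnn.
have [i nFi] := not_all_ex_not _ _ nFall.
by exists (lift i), id; split; [exact: lift_inj | split].
Qed.

Lemma det_scale_cofactors_ndvd k n (M : 'M[{mpoly K[k]}]_n.+1) F (c : K) d :
  (0 < d)%N -> (forall i, M i 0 \is d.-homog) -> F != 0 -> c != 0 ->
  \det M = c *: F -> ~ (forall i, dvdr F (\det (row' i (col' 0 M)))).
Proof.
move=> d0 homM F0 c0 detM Fcof.
pose vanishing_multiple x := exists G, x = F * G /\ G.@[fun _ => 0] = 0.
have [G [eG G0]] : vanishing_multiple (\det M).
  rewrite (expand_det_col M 0).
  apply: big_ind => [|_ _ [G [-> G0]] [G' [-> G'0]]|i _].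
  - by exists 0; rewrite mulr0 meval0.
  - by exists (G + G'); rewrite mulrDr mevalD G0 G'0 addr0.
  - rewrite /cofactor; have [y ->] := Fcof i; exists (M i 0 * ((-1) ^+ (i + 0) * y)).
    split; first ring.
    by rewrite !mevalM (meval0_dhomog d0 (homM i)) mul0r.
have : G = c%:MP by apply: (mulfI F0); rewrite -eG detM mulrC mul_mpolyC.
by move=> eGc; move: G0; rewrite eGc mevalC => /eqP; rewrite (negbTE c0).
Qed.

Lemma birational_of_minor (p : param K) n (A : 'M[{mpoly K[4]}]_(n.+1, n)) mt
    (alpha : 'I_n.+1 -> 'X_{1..3}) :
  row_monomials K mt alpha ->
  (forall j, col_homog A j /\ col_follows p A alpha j) ->
  (exists a, evp p (\det (row' a A)) != 0) -> birational p.
Proof.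
move=> [_ [_ [_ [b1 [b2 [b3 [e1 e2]]]]]]] cols [a Da0].
pose x i : {mpoly K[3]} := 'X_[alpha i].
have x0 i : x i != 0 := mpolyX_neq0 _ _.
pose w (i : 'I_n.+1) := (-1) ^+ i * evp p (\det (row' i A)).
have xw i j : x i * w j = x j * w i.
  have v0 : (\row_i x i) != 0.
    by apply/eqP => /matrixP /(_ 0 0); rewrite !mxE; apply/eqP.
  have vA : (\row_i x i) *m map_mx (evp p) A = 0.
    apply/matrixP => ? k; rewrite ord1 !mxE; have [_ fk] := cols k.
    by rewrite -[RHS]fk; apply: eq_bigr => l _; rewrite !mxE mulrC.
  by have := left_kernel_minors v0 vA i j; rewrite !mxE -!map_row' !det_map_mx.
have degA j : exists dj, [forall i, A i j \is dj.-homog].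
  by have [[dj [_ homj]] _] := cols j; exists dj; apply/forallP.
pose d j := xchoose (degA j).
pose beta (i : 'I_3) := nth b3 [:: b1; b2; b3] i.
have Xbeta (i : 'I_3) : 'X_i * x b3 = 'X_2 * x (beta i).
  by case: i => -[|[|[|]]] //= _; rewrite -?e1 -?e2.
have wb3 : w b3 != 0.
  have wa : w a != 0 by rewrite mulf_neq0 ?signr_eq0.
  apply: contra_neq (mulf_neq0 (x0 b3) wa) => wb0.
  by rewrite xw wb0 mulr0.
exists (\sum_j d j)%N, (fun i => (-1) ^+ beta i * \det (row' (beta i) A)).
have evpA i : evp p ((-1) ^+ beta i * \det (row' (beta i) A)) = w (beta i).
  by rewrite rmorphM rmorphXn rmorphN1.
split; last split.
- move=> i; rewrite rpredMsign; apply: det_dhomog => r j; rewrite mxE.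
  exact: (forallP (xchooseP (degA j))).
- by exists 2; rewrite evpA.
- have key (i j : 'I_3) :
      w (beta i) * 'X_j * ('X_2 * x b3) = 'X_i * 'X_j * w b3 * x b3.
    transitivity ('X_j * 'X_2 * (x b3 * w (beta i))); first ring.
    rewrite xw; transitivity ('X_j * w b3 * ('X_2 * x (beta i))); first ring.
    by rewrite -Xbeta; ring.
  move=> i j; apply: (mulIf (mulf_neq0 (mpolyX_neq0 K U_(2)%MM) (x0 b3))).
  by rewrite !evpA key key; ring.
Qed.

End ImplicitizationMatrices.

Theorem theorem4p2 (K : fieldType) (charK : [pchar K] =i pred0)
  (e : nat) (p : 'I_4 -> {mpoly K[3]})
  (hom_p : forall i, p i \is e.-homog)
  (gf : generically_finite p)
  (F : {mpoly K[4]}) (hF : implicit_equation p F)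
  (n : nat) (M : 'M[{mpoly K[4]}]_(n.+1))
  (hM : implicitization_matrix p F M) :
  exists k : nat,
    (exists c : K, c != 0 /\
       is_gcd_of (fun i : 'I_n.+1 => \det (row' i (col' 0 M))) (c *: F ^+ k)) /\
    (birational p <-> k = 0%N) /\
    (birational p <-> inversion_matrix p F (col' 0 M)).
Proof.
have [[mt [alpha [rows [[d0 [d0pos hom0]] cols]]]] hdet] := hM.
have [[del [c [_ [c0 detMcF]]]] del1] := hdet.
have [_ [_ [F_mirr [eF _]]]] := hF.
have F_prime := mpoly_irreducibles_prime (mirreducible_irreducible F_mirr).
have [|k [Fk_dvd Fk_gcd]] := @prime_expr_gcd _ _ F_prime _
  (fun i => \det (row' i (col' 0 M))) del.
  move=> H /dvdr_det_cofactors; rewrite detMcF -mul_mpolyC; apply: dvdr_unitl.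
  by rewrite mpoly_unitE mpolyC_eq0 c0 msizeC c0.
have k0E := prime_expr_gcd_eq0 F_prime Fk_dvd Fk_gcd.
have cols' j : col_homog (col' 0 M) j /\ col_follows p (col' 0 M) alpha j.
  have [[dj [dj0 homj]] fj] := cols j.
  split; first by exists dj; split=> // i; rewrite mxE.
  by rewrite /col_follows; under eq_bigr => i _ do rewrite mxE.
have bir_k0 : birational p <-> k = 0%N.
  rewrite k0E; split=> [bir|nFD].
    have [F0 _ _] := F_prime; have del_1 := del1 del c c0 detMcF bir.
    rewrite del_1 expr1 in detMcF.
    exact: det_scale_cofactors_ndvd d0pos hom0 F0 c0 detMcF.
  have [a nFa] := not_all_ex_not _ _ nFD.
  apply: (birational_of_minor rows cols'); exists a.
  by apply/eqP => /(evp_eq0_dvd gf F_mirr eF).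
exists k; split; first by exists 1; split; [exact: oner_neq0 | rewrite scale1r].
split=> //; rewrite bir_k0 k0E -rank_S_maximal_minors.
by split=> [rk|[_ //]]; split=> //; exists mt, alpha.
Qed.
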